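(* Let $(E,\rho)$ be a Polish metric space and $\Psi=\{\Psi(t)\}_{t\geq0}$ an $E$-valued time-homogeneous Markov process with transition semigroup $\{P(t)\}_{t\geq 0}$ and initial distribution $\mu$ on $(\Omega,\mathcal{F},\mathbb{P}_\mu)$. Let $V:E\to[0,\infty)$ be continuous and assume: (a) $\{P(t)\}$ has a unique invariant probability measure $\mu_*$, and there are $\gamma>0$ and $C:\{\nu\in\mathcal{M}_1(E):\int V\,d\nu<\infty\}\to[0,\infty)$ with $d_{\mathrm{FM}}(\nu P(t),\mu_* )\leq C(\nu)e^{-\gamma t}$ for all $t\geq0$ and such $\nu$, where $C(\delta_x)=\varkappa(V(x)+1)^{1/2}$ for some $\varkappa>0$; (b) there exist $A,B\geq 0$, $\Gamma>0$ with $P(t)V^2(x)\leq Ae^{-\Gamma t}V^2(x)+B$ for all $x,t$; (c) $\int_E V^2\,d\mu<\infty$. Fix $g\in\operatorname{Lip}_b(E)$, let $\bar g=g-\int g\,d\mu_*$, $\chi(x)=\int_0^\infty P(t)\bar g(x)\,dt$, and $R(t)=t^{-1/2}(\chi(\Psi(0))-\chi(\Psi(t)))$ for $t>0$. Then $R(t)\to 0$ in $\mathcal{L}^1(\mathbb{P}_\mu)$ as $t\to\infty$.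
   Context: $\mathcal{M}_1(E)$: Borel probability measures; $\operatorname{Lip}_b(E)$: bounded Lipschitz functions with $\|f\|_{\mathrm{BL}}=\max\{\|f\|_\infty,\sup_{x\neq y}|f(x)-f(y)|/\rho(x,y)\}$; $d_{\mathrm{FM}}(\mu,\nu)=\sup\{|\int f\,d\mu-\int f\,d\nu|:\|f\|_{\mathrm{BL}}\leq1\}$. $P(t)f(x)=\int f(y)P(t)(x,dy)$, $\nu P(t)=\int P(t)(x,\cdot)\nu(dx)$; $\Psi(0)\sim\mu$ and $\mathbb{P}_\mu(\Psi(s+t)\in A\mid\mathcal{F}(s))=P(t)(\Psi(s),A)$ for the natural filtration. *)

From HB Require Import structures.
From mathcomp Require Import all_boot all_order all_algebra.
From mathcomp Require Import all_classical all_reals all_analysis.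
From mathcomp Require Import measurable_realfun.
Set Implicit Arguments. Unset Strict Implicit. Unset Printing Implicit Defensive.
Import Order.TTheory GRing.Theory Num.Theory.
Local Open Scope classical_set_scope.
Local Open Scope ring_scope.

Section metric_defs.
Context {R : realType} {T : Type}.
Variable rho : T -> T -> R.

Definition is_metric : Prop :=
  [/\ forall x y, rho x y = 0 <-> x = y,
      forall x y, rho x y = rho y x &
      forall x y z, rho x z <= rho x y + rho y z].

Definition metric_complete : Prop :=
  forall u : nat -> T,
    (forall e, 0 < e -> exists N, forall m n, (N <= m)%N -> (N <= n)%N ->
        rho (u m) (u n) < e) ->
    exists x, forall e, 0 < e -> exists N, forall n, (N <= n)%N -> rho (u n) x < e.

Definition metric_separable : Prop :=
  exists D : set T, countable D /\
    forall x e, 0 < e -> exists2 y, D y & rho x y < e.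

Definition ropen (A : set T) : Prop :=
  forall x, A x -> exists2 e, 0 < e & forall y, rho x y < e -> A y.

Definition rcontinuous (f : T -> R) : Prop :=
  forall x e, 0 < e -> exists2 d, 0 < d & forall y, rho x y < d -> `|f x - f y| < e.

Definition lip_bounded (f : T -> R) : Prop :=
  (exists M, forall x, `|f x| <= M) /\
  (exists L, forall x y, `|f x - f y| <= L * rho x y).

Definition bl_le1 (f : T -> R) : Prop :=
  (forall x, `|f x| <= 1) /\ (forall x y, `|f x - f y| <= rho x y).
End metric_defs.

Definition metric_borel {R : realType} {d} {E : measurableType d}
  (rho : E -> E -> R) : Prop :=
  @measurable d E = <<s ropen rho >>.

Definition polish_borel {R : realType} {d} {E : measurableType d}
  (rho : E -> E -> R) : Prop :=
  [/\ is_metric rho, metric_complete rho, metric_separable rho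
    & metric_borel rho].

Section markov_defs.
Context {R : realType} {d : measure_display} {E : measurableType d}.
Implicit Types (P : R -> R.-pker E ~> E).

(* nu P(t) := A |-> \int P(t)(x, A) nu(dx) *)
Definition actP P (nu : probability E R) (t : R) : {measure set E -> \bar R} :=
  mkcomp_noparam
    (kprobability (measurable_cst (nu : pprobability E R)
       : measurable_fun [set: unit] _)) (P t) tt.

Definition Pf P (t : R) (f : E -> R) (x : E) : R :=
  fine (\int[P t x]_y (f y)%:E).

Definition transition_semigroup P : Prop :=
  [/\ forall x A, measurable A -> P 0 x A = \d_x A,
      forall s t x A, 0 <= s -> 0 <= t -> measurable A ->
        P (s + t) x A = (\int[P s x]_y (P t y A))%E &
      forall A, measurable A ->
        measurable_fun [set tx : R * E | 0 <= tx.1]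
          ((fun tx : R * E => P tx.1 tx.2 A) : R * E -> \bar R)].

Definition invariant_meas P (nu : probability E R) : Prop :=
  forall t A, 0 <= t -> measurable A -> actP P nu t A = nu A.

Definition dFM (rho : E -> E -> R) (m1 m2 : {measure set E -> \bar R}) : R :=
  sup [set `| fine (\int[m1]_x (f x)%:E) - fine (\int[m2]_x (f x)%:E) |
       | f in [set f | bl_le1 rho f]].

Definition nat_filtration {dO} {Omega : measurableType dO}
  (Psi : R -> Omega -> E) (s : R) : set (set Omega) :=
  <<s [set F | exists r B, [/\ 0 <= r, r <= s, measurable B
                             & F = Psi r @^-1` B] ] >>.

Definition markov_process {dO} {Omega : measurableType dO}
  (Pr : probability Omega R) (Psi : R -> Omega -> E) P
  (mu : probability E R) : Prop :=
  [/\ forall t, 0 <= t -> measurable_fun [set: Omega] (Psi t),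
      forall A, measurable A -> Pr (Psi 0 @^-1` A) = mu A &
      forall s t A F, 0 <= s -> 0 <= t -> measurable A ->
        nat_filtration Psi s F ->
        Pr (F `&` Psi (s + t) @^-1` A) = (\int[Pr]_(w in F) P t (Psi s w) A)%E].

Definition gbar (mustar : probability E R) (g : E -> R) : E -> R :=
  fun y => g y - fine (\int[mustar]_z (g z)%:E).

Definition chi P (mustar : probability E R) (g : E -> R) (x : E) : R :=
  fine (\int[lebesgue_measure]_(t in `[0%R, +oo[) (Pf P t (gbar mustar g) x)%:E).

Definition Rres {dO} {Omega : measurableType dO} (Psi : R -> Omega -> E) P
  (mustar : probability E R) (g : E -> R) (t : R) (w : Omega) : R :=
  (Num.sqrt t)^-1 * (chi P mustar g (Psi 0 w) - chi P mustar g (Psi t w)).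
End markov_defs.

From HB Require Import structures.
From mathcomp Require Import all_boot all_order all_algebra.
From mathcomp Require Import all_classical all_reals all_analysis.
From mathcomp Require Import measurable_realfun.
From mathcomp Require Import lra.
Import Order.TTheory GRing.Theory Num.Theory.
Local Open Scope classical_set_scope.
Local Open Scope ring_scope.

(* Write g = c f with c = max(1, sup |g|, Lip g), so that ||f||_BL <= 1.  Then
     |P(t) gbar(x)| <= c d_FM(delta_x P(t), mu_* )
                    <= c kappa (V(x) + 1)^(1/2) e^(-gamma t),
   and integrating in t gives |chi(x)| <= K (V(x) + 1)^(1/2) <= K (V(x)^2 + 2).
   By the Markov property at time 0 and (b), E V(Psi(s))^2 <= A \int V^2 dmu + B
   for every s >= 0, so E|chi(Psi(0)) - chi(Psi(t))| is bounded uniformly in t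
   and E|R(t)| = O(t^(-1/2)). *)

Section integral_le_nonmeasurable.
Context {d} {T : measurableType d} {R : realType}.
Variable mu : {measure set T -> \bar R}.

(* The integral of a nonnegative function is a supremum over simple minorants,
   so it is monotone without any measurability assumption; this is what allows
   integrating bounds on [chi], whose measurability is not available. *)
Lemma ge0_le_integral_nonmeas (f g : T -> \bar R) :
  (forall x, 0 <= f x)%E -> (forall x, f x <= g x)%E ->
  (\int[mu]_x f x <= \int[mu]_x g x)%E.
Proof.
move=> f0 fg; have g0 x : (0 <= g x)%E := le_trans (f0 x) (fg x).
rewrite !ge0_integralTE //; apply: ereal_sup_le => _ [h hf <-].
by exists h => //= x; exact: le_trans (hf x) (fg x).
Qed.

Lemma abse_integral_le_nonmeas (f h : T -> R) : (forall x, `|f x| <= h x) ->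
  (`| \int[mu]_x (f x)%:E | <= \int[mu]_x (h x)%:E)%E.
Proof.
move=> fh.
have part_le (u : T -> \bar R) : (forall x, 0 <= u x <= `|f x|%:E)%E ->
    (0 <= \int[mu]_x u x <= \int[mu]_x (h x)%:E)%E.
  move=> uf; rewrite integral_ge0 => [/=|x _]; last by case/andP: (uf x).
  apply: ge0_le_integral_nonmeas => x; first by case/andP: (uf x).
  by case/andP: (uf x) => _ /le_trans; apply; rewrite lee_fin.
have /andP[a0 ah] : (0 <= \int[mu]_x (EFin \o f)^\+ x <= \int[mu]_x (h x)%:E)%E.
  apply: part_le => x; rewrite funepos_ge0 funeposE ge_max !lee_fin.
  by rewrite ler_norm normr_ge0.
have /andP[b0 bh] : (0 <= \int[mu]_x (EFin \o f)^\- x <= \int[mu]_x (h x)%:E)%E.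
  apply: part_le => x; rewrite funeneg_ge0 funenegE ge_max -EFinN !lee_fin.
  by rewrite -normrN ler_norm normr_ge0.
rewrite integralE; move: a0 ah b0 bh.
case: (\int[mu]_x (h x)%:E)%E => [c| |]; last by move=> /le_trans h0 /h0.
- case: (\int[mu]_x _)%E => [a| |] //; case: (\int[mu]_x _)%E => [b| |] //.
  by rewrite !lee_fin /= => *; rewrite ler_norml; apply/andP; split; lra.
- by move=> *; exact: leey.
Qed.

End integral_le_nonmeasurable.

Lemma bounded_integrable {d} {T : measurableType d} {R : realType}
    {m : {measure set T -> \bar R}} {f : T -> R} (M : R) :
  (m setT < +oo)%E -> measurable_fun setT f -> (forall x, `|f x| <= M) ->
  m.-integrable setT (EFin \o f).
Proof.
move=> mfin mf fM; apply: measurable_bounded_integrable => //.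
exists M; split => [|M' MM' x _]; first by rewrite num_real.
exact: le_trans (fM x) (ltW MM').
Qed.

Section metric_space.
Context {R : realType} {d} {E : measurableType d} {rho : E -> E -> R}.
Hypothesis rho_metric : is_metric rho.

Lemma metric_ge0 x y : 0 <= rho x y.
Proof.
case: rho_metric => rho0 rhoC rho_tri.
have := rho_tri x y x; rewrite (rhoC y x) (proj2 (rho0 x x) erefl); lra.
Qed.

Lemma lip_bounded_rcontinuous (f : E -> R) :
  lip_bounded rho f -> rcontinuous rho f.
Proof.
move=> [_ [L fL]] x e e0; pose L' := Num.max 1 L.
have L'0 : 0 < L' by rewrite lt_max ltr01.
exists (e / L') => [|y xy]; first by rewrite divr_gt0.
apply: le_lt_trans (fL x y) _; apply: le_lt_trans (_ : L' * rho x y < e).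
  by rewrite ler_wpM2r ?metric_ge0 // le_max lexx orbT.
by rewrite mulrC -ltr_pdivlMr.
Qed.

Lemma lip_bounded_scale_bl (f : E -> R) : lip_bounded rho f ->
  exists2 c : R, 0 < c & bl_le1 rho (fun x => c^-1 * f x).
Proof.
move=> [[M fM] [L fL]]; pose c := Num.max 1 (Num.max M L).
have c0 : 0 < c by rewrite lt_max ltr01.
have [Mc Lc] : M <= c /\ L <= c by rewrite !le_max !lexx !orbT.
exists c => //; split => [x|x y].
all: rewrite -?mulrBr normrM ger0_norm ?invr_ge0 ?(ltW c0) //.
  by rewrite ler_pdivrMl // mulr1 (le_trans (fM x)).
rewrite ler_pdivrMl //; apply: le_trans (fL x y) _.
by rewrite ler_wpM2r ?metric_ge0.
Qed.

End metric_space.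

Lemma rcontinuous_measurable {R : realType} {d} {E : measurableType d}
  {rho : E -> E -> R} {f : E -> R} :
  metric_borel rho -> rcontinuous rho f -> measurable_fun setT f.
Proof.
move=> borel fc; apply: (measurability _ (RGenOInfty.measurableE R)) => //.
move=> /= _ [_ [a ->] <-]; rewrite setTI borel; apply: sub_sigma_algebra.
move=> x /=; rewrite /preimage /= in_itv /= andbT => ax.
have [e e0 he] := fc x (f x - a) ltac:(by rewrite subr_gt0).
exists e => // y /he; rewrite in_itv /= andbT => fxy.
have := ler_norm (f x - f y); lra.
Qed.

Lemma fine_abse_le {R : realType} (e : \bar R) (r : R) :
  (`|e| <= r%:E)%E -> `|fine e| <= r.
Proof. by case: e => [e| |] //=; rewrite lee_fin. Qed.

Section fortet_mourier.
Context {R : realType} {d} {E : measurableType d} (rho : E -> E -> R).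

Lemma abs_integral_bl_le1 (m : {measure set E -> \bar R}) (f : E -> R) :
  m setT = 1%E -> bl_le1 rho f -> `|fine (\int[m]_x (f x)%:E)| <= 1.
Proof.
move=> m1 [f1 _]; apply: fine_abse_le.
have := @abse_integral_le_nonmeas _ _ _ m f (fun=> 1) f1.
by rewrite integral_cst // m1 mule1.
Qed.

Lemma le_dFM (m1 m2 : {measure set E -> \bar R}) (f : E -> R) :
  m1 setT = 1%E -> m2 setT = 1%E -> bl_le1 rho f ->
  `| fine (\int[m1]_x (f x)%:E) - fine (\int[m2]_x (f x)%:E) | <= dFM rho m1 m2.
Proof.
move=> m1T m2T fbl; apply: ub_le_sup; last by exists f.
exists 2 => _ [h hbl <-]; apply: le_trans (ler_normB _ _) _.
have := abs_integral_bl_le1 _ _ m1T hbl.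
by have := abs_integral_bl_le1 _ _ m2T hbl; lra.
Qed.

End fortet_mourier.

Section semigroup_action.
Context {R : realType} {d} {E : measurableType d} (P : R -> R.-pker E ~> E).

Lemma actP_dirac x t A : measurable A -> actP P \d_x t A = P t x A.
Proof.
move=> mA; rewrite /actP /mkcomp_noparam /= /kcomp_noparam /=.
by rewrite integral_dirac ?diracT ?mul1e //; exact: measurable_kernel.
Qed.

Lemma Pf_gbar (mustar : probability E R) (f : E -> R) (M : R) t x :
  measurable_fun setT f -> (forall y, `|f y| <= M) ->
  Pf P t (gbar mustar f) x = Rintegral (P t x) setT f - Rintegral mustar setT f.
Proof.
move=> mf fM; have Pfin : (P t x setT < +oo)%E by rewrite prob_kernel ltry.
rewrite /Pf /gbar -/(Rintegral (P t x) setT _) RintegralB //.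
- by rewrite Rintegral_cst // prob_kernel mulr1.
- exact: bounded_integrable M Pfin mf fM.
- by apply: (bounded_integrable `|fine (\int[mustar]_z (f z)%:E)| Pfin).
Qed.

Lemma abs_Pf_gbar_le (rho : E -> E -> R) (mustar : probability E R)
    (f : E -> R) (c : R) t x :
  0 <= c -> measurable_fun setT f -> bl_le1 rho f ->
  `|Pf P t (gbar mustar (fun y => c * f y)) x| <=
    c * dFM rho (actP P \d_x t) mustar.
Proof.
move=> c0 mf fbl; have f1 := proj1 fbl.
have cf1 y : `|c * f y| <= c by rewrite normrM ger0_norm // ler_piMr.
have Pfin : (P t x setT < +oo)%E by rewrite prob_kernel ltry.
have mustar_fin : (mustar setT < +oo)%E by rewrite probability_setT ltry.
rewrite (@Pf_gbar mustar _ c t x (measurable_funM (measurable_cst c) mf) cf1).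
have iP := bounded_integrable 1 Pfin mf f1.
have iS := bounded_integrable 1 mustar_fin mf f1.
rewrite !RintegralZl // -mulrBr normrM ger0_norm // ler_wpM2l // /Rintegral.
rewrite (eq_measure_integral (actP P \d_x t)) => [|A mA _]; last first.
  by rewrite actP_dirac.
apply: le_dFM fbl; last exact: probability_setT.
by rewrite actP_dirac // prob_kernel.
Qed.

End semigroup_action.

(* [F] is dominated by [K / gam] times the exponential density of rate [gam]. *)
Lemma abs_integral_exp_decay_le {R : realType} (F : R -> R) (K gam : R) :
  0 <= K -> 0 < gam ->
  (forall t, 0 <= t -> `|F t| <= K * expR (- (gam * t))) ->
  `|fine (\int[lebesgue_measure]_(t in `[0%R, +oo[) (F t)%:E)| <= K / gam.
Proof.
move=> K0 gam0 FK; apply: fine_abse_le; rewrite integral_mkcond.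
pose G t := if 0 <= t then F t else 0.
rewrite (_ : (\int[_]_t _ =
              \int[@lebesgue_measure R]_t (G t)%:E)%E); last first.
  apply: eq_integral => t _.
  by rewrite /G patchE mem_setE /= in_itv /= andbT; case: ifP.
apply: le_trans (@abse_integral_le_nonmeas _ _ _ (@lebesgue_measure R) G
  (fun t => K / gam * exponential_pdf gam t) _) _.
  move=> t; rewrite /G /exponential_pdf patchE mem_setE /= in_itv /= andbT.
  case: ifPn => [t0|_]; last by rewrite normr0 mulr0.
  by apply: le_trans (FK t t0) _; rewrite mulrA divfK ?gt_eqF // mulNr.
under eq_integral do rewrite EFinM.
rewrite ge0_integralZl ?integral_exponential_pdf ?mule1 //.
- by apply/measurable_EFinP; apply: measurable_exponential_pdf; exact: ltW.
- by move=> t _; rewrite lee_fin exponential_pdf_ge0 // ltW.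
- by rewrite lee_fin divr_ge0 // ltW.
Qed.

Lemma sqrt_addr1_le {R : realType} (y : R) :
  0 <= y -> Num.sqrt (y + 1) <= y ^+ 2 + 2.
Proof.
move=> y0; have := sqr_ge0 (Num.sqrt (y + 1) - 1).
have : Num.sqrt (y + 1) ^+ 2 = y + 1 by rewrite sqr_sqrtr // addr_ge0.
nra.
Qed.

Lemma abs_chi_le {R : realType} {d} {E : measurableType d} {rho : E -> E -> R}
    {P : R -> R.-pker E ~> E} {mustar : probability E R} {g w : E -> R}
    {gam : R} :
  is_metric rho -> metric_borel rho -> lip_bounded rho g -> 0 < gam ->
  (forall x, 0 <= w x) ->
  (forall x t, 0 <= t ->
     dFM rho (actP P \d_x t) mustar <= w x * expR (- (gam * t))) ->
  exists2 K, 0 <= K & forall x, `|chi P mustar g x| <= K * w x.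
Proof.
move=> rhom borel glip gam0 w0 decay.
have [c c0 fbl] := lip_bounded_scale_bl rhom _ glip.
set f := fun x => c^-1 * g x in fbl.
have gE : g = (fun y => c * f y).
  by apply/funext => y; rewrite /f mulrA divff ?mul1r // gt_eqF.
have mf : measurable_fun setT f.
  apply: measurable_funM; first exact: measurable_cst.
  exact: rcontinuous_measurable borel (lip_bounded_rcontinuous rhom _ glip).
exists (c / gam) => [|x]; first by rewrite divr_ge0 // ltW.
rewrite mulrAC gE; apply: abs_integral_exp_decay_le => [|//|t t0].
  by rewrite mulr_ge0 // ltW.
apply: le_trans (@abs_Pf_gbar_le _ _ _ P rho mustar f c t x (ltW c0) mf fbl) _.
by rewrite -mulrA ler_wpM2l ?decay // ltW.
Qed.

(* Lifts a kernel to the parameterized form [T0 * X ~> Y] used by [kcomp]. *)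
Section pker_snd.
Context {R : realType} {d0 d d'} {T0 : measurableType d0}
  {X : measurableType d} {Y : measurableType d'}.
Variable k : R.-pker X ~> Y.

Definition pker_snd : T0 * X -> {measure set Y -> \bar R} := fun z => k z.2.

Let measurable_pker_snd U : measurable U -> measurable_fun setT (pker_snd ^~ U).
Proof.
by move=> mU; exact: measurableT_comp (measurable_kernel k U mU) measurable_snd.
Qed.

HB.instance Definition _ :=
  isKernel.Build _ _ _ _ R pker_snd measurable_pker_snd.

Let pker_snd_setT z : pker_snd z setT = 1%E.
Proof. exact: prob_kernel. Qed.

HB.instance Definition _ :=
  Kernel_isProbability.Build _ _ _ _ R pker_snd pker_snd_setT.

End pker_snd.

Section markov_process_law.
Context {R : realType} {d} {E : measurableType d}.
Context {dO} {Omega : measurableType dO}.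
Context {Pr : probability Omega R} {Psi : R -> Omega -> E}.
Context {P : R -> R.-pker E ~> E} {mu : probability E R}.
Hypothesis markov : markov_process Pr Psi P mu.
Local Open Scope ereal_scope.

Let mPsi {t : R} : (0 <= t)%R -> measurable_fun setT (Psi t).
Proof. by case: markov => + _ _; apply. Qed.

Lemma integral_initial_law (h : E -> \bar R) :
  measurable_fun setT h -> (forall x, 0 <= h x) ->
  \int[Pr]_w h (Psi 0 w) = \int[mu]_x h x.
Proof.
move=> mh h0; case: markov => _ law0 _.
rewrite -(@ge0_integral_pushforward _ _ _ _ _ _ (mPsi (lexx 0%R)) Pr setT) //.
by apply: eq_measure_integral => [|mf A mA _]; [exact: mPsi | exact: law0].
Qed.

Lemma markov_law t A : (0 <= t)%R -> measurable A ->
  Pr (Psi t @^-1` A) = \int[mu]_x P t x A.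
Proof.
move=> t0 mA; case: markov => _ _ mk.
have Omega_F0 : nat_filtration Psi 0 setT.
  by rewrite -(setD0 setT); apply: sigma_algebraCD; exact: sigma_algebra0.
have := mk 0%R t A setT (lexx 0%R) t0 mA Omega_F0; rewrite add0r setTI => ->.
by apply: integral_initial_law => //; exact: measurable_kernel.
Qed.

Lemma integral_markov_law t (h : E -> \bar R) : (0 <= t)%R ->
  measurable_fun setT h -> (forall x, 0 <= h x) ->
  \int[Pr]_w h (Psi t w) = \int[mu]_x \int[P t x]_y h y.
Proof.
move=> t0 mh h0.
pose l := kprobability (measurable_cst (mu : pprobability E R)
  : measurable_fun [set: unit] _).
rewrite -(@ge0_integral_pushforward _ _ _ _ _ _ (mPsi t0) Pr setT) //.
rewrite (eq_measure_integral (kcomp l (pker_snd (P t)) tt)) => [||mf A mA _].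
- by rewrite integral_kcomp.
- exact: mPsi.
- exact: markov_law.
Qed.

Lemma markov_moment_le (f : E -> R) (A B t : R) : (0 <= t)%R ->
  measurable_fun setT f -> (forall x, 0 <= f x)%R -> (0 <= A)%R -> (0 <= B)%R ->
  (forall x, \int[P t x]_y (f y)%:E <= (A * f x + B)%:E) ->
  \int[Pr]_w (f (Psi t w))%:E <= A%:E * \int[mu]_x (f x)%:E + B%:E.
Proof.
move=> t0 mf f0 A0 B0 Pf_le.
have mEf : measurable_fun setT (EFin \o f) by exact/measurable_EFinP.
rewrite (integral_markov_law _ _ t0 mEf) => [|x]; last by rewrite lee_fin.
have Pf0 x : 0 <= \int[P t x]_y (f y)%:E.
  by apply: integral_ge0 => y _; rewrite lee_fin.
apply: le_trans (ge0_le_integral_nonmeas mu _ _ Pf0 Pf_le) _.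
under eq_integral do rewrite EFinD EFinM.
rewrite ge0_integralD //; last 2 first.
- by move=> x _; rewrite -EFinM lee_fin mulr_ge0.
- by apply/measurable_EFinP; exact: measurable_funM.
rewrite ge0_integralZl //; last by move=> x _; rewrite lee_fin.
have mu1 : (mu : measure E R) setT = 1 by exact: probability_setT.
by rewrite integral_cst // mu1 mule1.
Qed.

Lemma markov_sq_moment_bounded {V : E -> R} {A B Gam : R} :
  measurable_fun setT V -> (0 <= A)%R -> (0 <= B)%R -> (0 <= Gam)%R ->
  (forall x t, (0 <= t)%R -> \int[P t x]_y ((V y) ^+ 2)%:E
     <= (A * expR (- (Gam * t)) * (V x) ^+ 2 + B)%:E) ->
  \int[mu]_x ((V x) ^+ 2)%:E < +oo ->
  exists m : R, forall t, (0 <= t)%R ->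
    \int[Pr]_w ((V (Psi t w)) ^+ 2)%:E <= m%:E.
Proof.
move=> mV A0 B0 Gam0 decay mu_fin.
have V2_fin : \int[mu]_x ((V x) ^+ 2)%:E \is a fin_num.
  by rewrite ge0_fin_numE // integral_ge0 // => x _; rewrite lee_fin sqr_ge0.
exists (A * fine (\int[mu]_x ((V x) ^+ 2)%:E) + B)%R => t t0.
rewrite EFinD EFinM fineK //; apply: markov_moment_le => // [|x|x].
- exact: measurable_funX.
- exact: sqr_ge0.
apply: le_trans (decay x t t0) _; rewrite lee_fin lerD2r -mulrA.
rewrite ler_wpM2l // ler_piMl ?sqr_ge0 // expR_le1 oppr_le0.
by rewrite mulr_ge0.
Qed.

Let measurable_sq (V : E -> R) s : measurable_fun setT V -> (0 <= s)%R ->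
  measurable_fun setT (fun w => V (Psi s w) ^+ 2)%R.
Proof.
by move=> mV s0; apply: measurable_funX; exact: measurableT_comp mV (mPsi s0).
Qed.

Lemma integral_sq_sum_le (V : E -> R) (m t : R) : (0 <= t)%R ->
  measurable_fun setT V ->
  (forall s, (0 <= s)%R -> \int[Pr]_w ((V (Psi s w)) ^+ 2)%:E <= m%:E) ->
  \int[Pr]_w (V (Psi 0%R w) ^+ 2 + V (Psi t w) ^+ 2 + 4)%:E <= (2 * m + 4)%:E.
Proof.
move=> t0 mV mom.
have sq0 s w : 0 <= (V (Psi s w) ^+ 2)%:E by rewrite lee_fin sqr_ge0.
have msqE s : (0 <= s)%R ->
    measurable_fun setT (fun w => (V (Psi s w) ^+ 2)%:E).
  by move=> s0; exact/measurable_EFinP/measurable_sq.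
have Pr1 : (Pr : measure Omega R) setT = 1 by exact: probability_setT.
under eq_integral do rewrite 2!EFinD.
rewrite ge0_integralD //; last 2 first.
- by move=> w _; rewrite adde_ge0.
- by apply: emeasurable_funD; apply: msqE.
rewrite ge0_integralD //; last 2 first.
- exact: msqE (lexx 0%R).
- exact: msqE t0.
rewrite integral_cst // Pr1 mule1.
rewrite (_ : (2 * m + 4)%:E = m%:E + m%:E + 4%:E); last first.
  by rewrite -!EFinD; congr EFin; lra.
apply: leeD => //; apply: leeD; exact: mom.
Qed.

Lemma abs_increment_L1_le (h V : E -> R) (K m t : R) :
  (0 < t)%R -> (0 <= K)%R -> measurable_fun setT V -> (forall x, 0 <= V x)%R ->
  (forall x, `|h x| <= K * Num.sqrt (V x + 1))%R ->
  (forall s, (0 <= s)%R -> \int[Pr]_w ((V (Psi s w)) ^+ 2)%:E <= m%:E) ->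
  \int[Pr]_w (`|(Num.sqrt t)^-1 * (h (Psi 0%R w) - h (Psi t w))|)%:E
    <= ((Num.sqrt t)^-1 * (K * (2 * m + 4)))%:E.
Proof.
move=> t0 K0 mV V0 hK mom; set k := ((Num.sqrt t)^-1)%R.
have k0 : (0 <= k)%R by rewrite invr_ge0 sqrtr_ge0.
have hV2 x : (`|h x| <= K * (V x ^+ 2 + 2))%R.
  by apply: le_trans (hK x) _; rewrite ler_wpM2l // sqrt_addr1_le.
pose sum_sq w := (V (Psi 0%R w) ^+ 2 + V (Psi t w) ^+ 2 + 4)%R.
have pointwise w :
    `|k * (h (Psi 0%R w) - h (Psi t w))|%:E <= (k * K)%:E * (sum_sq w)%:E.
  rewrite -EFinM lee_fin normrM ger0_norm // -mulrA ler_wpM2l //.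
  apply: le_trans (ler_normB _ _) _.
  by have := hV2 (Psi 0%R w); have := hV2 (Psi t w); rewrite /sum_sq; lra.
apply: le_trans (ge0_le_integral_nonmeas Pr _ _ _ pointwise) _ => [w|].
  by rewrite lee_fin.
rewrite ge0_integralZl //; last 3 first.
- apply/measurable_EFinP; apply: measurable_funD; last exact: measurable_cst.
  by apply: measurable_funD; apply: measurable_sq => //; exact: ltW.
- by move=> w _; rewrite lee_fin !addr_ge0 ?sqr_ge0.
- by rewrite lee_fin mulr_ge0.
rewrite mulrA [leRHS]EFinM; apply: lee_wpmul2l.
  by rewrite lee_fin mulr_ge0.
by apply: integral_sq_sum_le => //; exact: ltW.
Qed.

End markov_process_law.

Lemma invsqrt_scale_cvg0 {R : realType} (K : R) :
  ((Num.sqrt t)^-1 * K)%:E @[t --> +oo] --> 0%E.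
Proof.
apply: cvg_EFin; first by near=> t.
apply/cvgrPdist_lt => e e0; near=> t.
have t0 : 0 < t by near: t; exact: nbhs_pinfty_gt.
have Ke : `|K| / e < Num.sqrt t.
  have Ke0 : 0 <= `|K| / e by rewrite divr_ge0 // ltW.
  rewrite -[X in X < _](ger0_norm Ke0) -sqrtr_sqr ltr_sqrt //.
  by near: t; apply: nbhs_pinfty_gt; rewrite num_real.
rewrite /= sub0r normrN normrM ger0_norm ?invr_ge0 ?sqrtr_ge0 //.
by rewrite mulrC ltr_pdivrMr ?sqrtr_gt0 // mulrC -ltr_pdivrMr.
Unshelve. all: by end_near.
Qed.

Theorem lemma3p6 (R : realType) (d : measure_display) (E : measurableType d)
  (rho : E -> E -> R) (dO : measure_display) (Omega : measurableType dO)
  (Pr : probability Omega R) (Psi : R -> Omega -> E)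
  (P : R -> R.-pker E ~> E) (mu mustar : probability E R)
  (V : E -> R) (g : E -> R) :
  polish_borel rho ->
  transition_semigroup P ->
  markov_process Pr Psi P mu ->
  rcontinuous rho V -> (forall x, 0 <= V x) ->
  (* (a) *)
  invariant_meas P mustar ->
  (forall nu : probability E R, invariant_meas P nu ->
     forall A, measurable A -> nu A = mustar A) ->
  (exists gamma : R, 0 < gamma /\
   exists C : probability E R -> R,
     [/\ forall nu, 0 <= C nu,
         forall (nu : probability E R) t,
           (\int[nu]_x (V x)%:E < +oo)%E -> 0 <= t ->
           dFM rho (actP P nu t) mustar <= C nu * expR (- (gamma * t)) &
         exists2 kappa : R, 0 < kappa &
           forall x, C \d_x = kappa * Num.sqrt (V x + 1)]) ->
  (* (b) *)
  (exists A B Gamma : R, [/\ 0 <= A, 0 <= B, 0 < Gamma &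
     forall x t, 0 <= t ->
       (\int[P t x]_y ((V y) ^+ 2)%:E
          <= (A * expR (- (Gamma * t)) * (V x) ^+ 2 + B)%:E)%E]) ->
  (* (c) *)
  (\int[mu]_x ((V x) ^+ 2)%:E < +oo)%E ->
  lip_bounded rho g ->
  (\int[Pr]_w (`| Rres Psi P mustar g t w |)%:E)%E @[t --> +oo] --> 0%E.
Proof.
move=> [rho_metric _ _ borel] _ markov Vcont V0 _ _
  [gam [gam0 [C [_ C_decay [kap kap0 C_dirac]]]]]
  [A [B [Gam [A0 B0 Gam0 V2_decay]]]] mu_V2 glip.
have mV := rcontinuous_measurable borel Vcont.
have dirac_decay x t : 0 <= t ->
    dFM rho (actP P \d_x t) mustar
      <= kap * Num.sqrt (V x + 1) * expR (- (gam * t)).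
  move=> t0; rewrite -C_dirac; apply: C_decay => //.
  by rewrite integral_dirac ?diracT ?mul1e ?ltry //; exact/measurable_EFinP.
have w0 x : 0 <= kap * Num.sqrt (V x + 1) by rewrite mulr_ge0 ?sqrtr_ge0 // ltW.
have [K K0 chi_le] := abs_chi_le rho_metric borel glip gam0 w0 dirac_decay.
have [m moment_le] :=
  markov_sq_moment_bounded markov mV A0 B0 (ltW Gam0) V2_decay mu_V2.
apply: (squeeze_cvge (f := fun=> 0%E) _ (cvg_cst _)
  (invsqrt_scale_cvg0 (K * kap * (2 * m + 4)))).
near=> t; have t0 : 0 < t by near: t; exact: nbhs_pinfty_gt.
rewrite integral_ge0 /= => [|w _]; last by rewrite lee_fin.
apply: (abs_increment_L1_le markov) => // [||x].
- by rewrite mulr_ge0 // ltW.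
- exact: mV.
- by rewrite -mulrA chi_le.
Unshelve. all: by end_near.
Qed.
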